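(* Let $G$ be a countable graph. Suppose that some connected component $H$ of $G$ has infinitely many pairwise non-isomorphic connected graphs equimorphic to $H$. Then $G$ has infinitely many pairwise non-isomorphic siblings, and if $G$ has at least two connected components, then infinitely many pairwise non-isomorphic siblings of $G$ are disconnected.
   Context: Graphs are undirected and loopless. $G$ embeds into $G'$ if $G$ is isomorphic to an induced subgraph of $G'$; $G,G'$ are equimorphic if each embeds into the other; a sibling of $G$ is a graph equimorphic to $G$. *)

From Stdlib Require Import Relations.

Record Graph : Type := MkGraph {
  vert : Type;
  adj : vert -> vert -> Prop;
  adj_sym : forall x y, adj x y -> adj y x;
  adj_irrefl : forall x, ~ adj x x
}.

Definition countable_graph (G : Graph) : Prop :=
  exists f : vert G -> nat, forall x y, f x = f y -> x = y.

Definition isomorphic (G G' : Graph) : Prop :=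
  exists (f : vert G -> vert G') (g : vert G' -> vert G),
    (forall x, g (f x) = x) /\ (forall y, f (g y) = y) /\
    (forall x y, adj G x y <-> adj G' (f x) (f y)).

(* G embeds into G': G is isomorphic to an induced subgraph of G',
   i.e. there is an injective map preserving adjacency and non-adjacency. *)
Definition embeds (G G' : Graph) : Prop :=
  exists f : vert G -> vert G',
    (forall x y, f x = f y -> x = y) /\
    (forall x y, adj G x y <-> adj G' (f x) (f y)).

Definition equimorphic (G G' : Graph) : Prop := embeds G G' /\ embeds G' G.

Definition sibling (G' G : Graph) : Prop := equimorphic G' G.

Definition reach (G : Graph) : vert G -> vert G -> Prop :=
  clos_refl_trans (vert G) (adj G).

Definition connected (G : Graph) : Prop :=
  inhabited (vert G) /\ forall x y : vert G, reach G x y.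

Definition induced (G : Graph) (C : vert G -> Prop) : Graph :=
  MkGraph {x : vert G | C x}
    (fun x y => adj G (proj1_sig x) (proj1_sig y))
    (fun x y h => adj_sym G _ _ h)
    (fun x h => adj_irrefl G _ h).

Definition component (G : Graph) (x : vert G) : Graph :=
  induced G (fun y => reach G x y).

Definition at_least_two_components (G : Graph) : Prop :=
  exists x y : vert G, ~ reach G x y.

From Stdlib Require Import Relations Classical ClassicalEpsilon ProofIrrelevance
  FunctionalExtensionality PropExtensionality Arith Lia.

(* Replacing every component of G that satisfies an adjacency-closed property P
   by a copy of a connected graph X equimorphic to those components gives a
   sibling of G whose components are X and the untouched components of G.
   Pass to a subsequence of the F n such that either no F n or every F n is a
   component of G.  In the first case replace the component of x by F n; in the
   second, replace the components isomorphic to F n by F (n+1).  Such a sibling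
   is disconnected, since some component of G is kept (one other than that of
   x, resp. one isomorphic to F (n+1)).  An isomorphism between two of these
   siblings carries components to components, so it would identify two
   distinct F n or, in the first case, make some F n a component of G.  If G is connected, the F n are siblings themselves. *)

Lemma sig_eq {A : Type} {P : A -> Prop} (a b : sig P) : proj1_sig a = proj1_sig b -> a = b.
Proof. apply eq_sig_hprop; intros; apply proof_irrelevance. Qed.

Lemma reach_sym (G : Graph) (a b : vert G) : reach G a b -> reach G b a.
Proof.
  induction 1; [apply rt_step, adj_sym; assumption | apply rt_refl | eapply rt_trans; eauto].
Qed.

Lemma reach_preserved (G : Graph) (Q : vert G -> Prop) :
  (forall a b, adj G a b -> Q a -> Q b) -> forall a b, reach G a b -> Q a -> Q b.
Proof. intros HQ a b; induction 1; eauto. Qed.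

Lemma reach_map (G H : Graph) (f : vert G -> vert H) :
  (forall a b, adj G a b -> adj H (f a) (f b)) ->
  forall a b, reach G a b -> reach H (f a) (f b).
Proof.
  intros Hf a b; induction 1;
    [apply rt_step, Hf; assumption | apply rt_refl | eapply rt_trans; eauto].
Qed.

Lemma isomorphic_sym (G H : Graph) : isomorphic G H -> isomorphic H G.
Proof.
  intros (f & g & gf & fg & Hadj). exists g, f. split; [exact fg | split; [exact gf |]].
  intros x y. rewrite Hadj, !fg. reflexivity.
Qed.

Lemma isomorphic_trans (G H K : Graph) : isomorphic G H -> isomorphic H K -> isomorphic G K.
Proof.
  intros (f & g & gf & fg & Hadj) (f' & g' & gf' & fg' & Hadj').
  exists (fun x => f' (f x)), (fun z => g (g' z)). split; [|split].
  - intro x. rewrite gf'. apply gf.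
  - intro z. rewrite fg. apply fg'.
  - intros x y. rewrite Hadj, Hadj'. reflexivity.
Qed.

Lemma isomorphic_embeds (G H : Graph) : isomorphic G H -> embeds G H.
Proof.
  intros (f & g & gf & _ & Hadj). exists f. split; [|exact Hadj].
  intros x y E. rewrite <- (gf x), <- (gf y), E. reflexivity.
Qed.

Lemma embeds_trans (G H K : Graph) : embeds G H -> embeds H K -> embeds G K.
Proof.
  intros (f & finj & Hadj) (f' & finj' & Hadj'). exists (fun x => f' (f x)). split.
  - intros x y E. apply finj, finj', E.
  - intros x y. rewrite Hadj, Hadj'. reflexivity.
Qed.

Lemma isomorphic_equimorphic (G H : Graph) : isomorphic G H -> equimorphic G H.
Proof. intro I. split; apply isomorphic_embeds; [exact I | apply isomorphic_sym, I]. Qed.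

Lemma equimorphic_sym (G H : Graph) : equimorphic G H -> equimorphic H G.
Proof. intros [A B]. split; assumption. Qed.

Lemma equimorphic_trans (G H K : Graph) :
  equimorphic G H -> equimorphic H K -> equimorphic G K.
Proof. intros [A B] [C D]. split; eapply embeds_trans; eassumption. Qed.

Lemma isomorphic_component (G H : Graph) (f : vert G -> vert H) (g : vert H -> vert G) :
  (forall x, g (f x) = x) -> (forall y, f (g y) = y) ->
  (forall x y, adj G x y <-> adj H (f x) (f y)) ->
  forall v, isomorphic (component G v) (component H (f v)).
Proof.
  intros gf fg Hadj v.
  assert (Hf : forall a b, adj G a b -> adj H (f a) (f b)) by (intros; apply Hadj; assumption).
  assert (Hg : forall a b, adj H a b -> adj G (g a) (g b))
    by (intros a b Hab; apply Hadj; rewrite !fg; exact Hab).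
  assert (Hback : forall z, reach H (f v) z -> reach G v (g z))
    by (intros z Hz; rewrite <- (gf v); apply reach_map; assumption).
  exists (fun y => exist _ (f (proj1_sig y)) (reach_map G H f Hf v _ (proj2_sig y))),
         (fun z => exist _ (g (proj1_sig z)) (Hback _ (proj2_sig z))).
  split; [|split].
  - intro y. apply sig_eq, gf.
  - intro z. apply sig_eq, fg.
  - intros a b. apply Hadj.
Qed.

Definition has_component (G X : Graph) : Prop :=
  exists v, isomorphic (component G v) X.

Lemma has_component_isomorphic (G H X : Graph) :
  isomorphic G H -> has_component G X -> has_component H X.
Proof.
  intros (f & g & gf & fg & Hadj) [v Hv]. exists (f v).
  eapply isomorphic_trans; [|exact Hv].
  apply isomorphic_sym, (isomorphic_component G H f g gf fg Hadj).
Qed.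

Lemma component_reach (G : Graph) (u v : vert G) :
  reach G u v -> isomorphic (component G u) (component G v).
Proof.
  intro Huv.
  exists (fun y => exist _ (proj1_sig y) (rt_trans _ _ _ _ _ (reach_sym _ _ _ Huv) (proj2_sig y))),
         (fun y => exist _ (proj1_sig y) (rt_trans _ _ _ _ _ Huv (proj2_sig y))).
  split; [|split]; intros; try (apply sig_eq; reflexivity); reflexivity.
Qed.

Lemma component_whole (G : Graph) (x : vert G) :
  (forall a b, reach G a b) -> isomorphic (component G x) G.
Proof.
  intro Hall.
  exists (fun y => proj1_sig y), (fun y => exist _ y (Hall x y)).
  split; [|split]; intros; try (apply sig_eq); reflexivity.
Qed.

Lemma embedding_into_component (G X : Graph) (r : vert G) :
  embeds X (component G r) ->
  exists k : vert X -> vert G,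
    (forall w w', k w = k w' -> w = w') /\
    (forall w w', adj X w w' <-> adj G (k w) (k w')) /\
    (forall w, reach G r (k w)).
Proof.
  intros (k & kinj & kadj). exists (fun w => proj1_sig (k w)). split; [|split].
  - intros w w' E. apply kinj, sig_eq, E.
  - exact kadj.
  - intro w. exact (proj2_sig (k w)).
Qed.

Lemma embedding_of_component (G X : Graph) (r : vert G) (x0 : vert X) :
  embeds (component G r) X ->
  exists e : vert G -> vert X, forall a b, reach G r a -> reach G r b ->
    (e a = e b -> a = b) /\ (adj G a b <-> adj X (e a) (e b)).
Proof.
  intros (e & einj & eadj).
  exists (fun a => match excluded_middle_informative (reach G r a) with
                   | left h => e (exist _ a h) | right _ => x0 end).
  intros a b ha hb.
  destruct (excluded_middle_informative (reach G r a)) as [ha'|]; [|contradiction].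
  destruct (excluded_middle_informative (reach G r b)) as [hb'|]; [|contradiction].
  split.
  - intro E. exact (f_equal (@proj1_sig _ _) (einj _ _ E)).
  - exact (eadj (exist _ a ha') (exist _ b hb')).
Qed.

Definition root (G : Graph) (v : vert G) : vert G := epsilon (inhabits v) (reach G v).

Lemma reach_root (G : Graph) (v : vert G) : reach G v (root G v).
Proof. unfold root. apply epsilon_spec. exists v. apply rt_refl. Qed.

Lemma root_eq (G : Graph) (u v : vert G) : reach G u v -> root G u = root G v.
Proof.
  intro Huv. unfold root.
  rewrite (proof_irrelevance _ (inhabits u) (inhabits v)). f_equal.
  extensionality y. apply propositional_extensionality. split; intro H.
  - eapply rt_trans; [apply reach_sym, Huv | exact H].
  - eapply rt_trans; [exact Huv | exact H].
Qed.

Lemma root_idem (G : Graph) (v : vert G) : root G (root G v) = root G v.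
Proof. symmetry. apply root_eq, reach_root. Qed.

Section Replacement.

Variables (G : Graph) (P : vert G -> Prop) (X : Graph).

Definition kept_vertex : Type := {v : vert G | ~ P v}.
(* One copy of X per replaced component, indexed by the root of that component. *)
Definition replaced_root : Type := {r : vert G | P r /\ root G r = r}.

Definition replace_adj (a b : kept_vertex + replaced_root * vert X) : Prop :=
  match a, b with
  | inl u, inl v => adj G (proj1_sig u) (proj1_sig v)
  | inr (r, w), inr (r', w') => r = r' /\ adj X w w'
  | _, _ => False
  end.

Lemma replace_adj_sym a b : replace_adj a b -> replace_adj b a.
Proof.
  destruct a as [u|[r w]], b as [v|[r' w']]; simpl; try tauto.
  - apply adj_sym.
  - intros [-> A]. split; [reflexivity | apply adj_sym, A].
Qed.

Lemma replace_adj_irrefl a : ~ replace_adj a a.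
Proof.
  destruct a as [u|[r w]]; simpl; [apply adj_irrefl | intros [_ A]; exact (adj_irrefl _ _ A)].
Qed.

Definition replace : Graph := MkGraph _ replace_adj replace_adj_sym replace_adj_irrefl.

Lemma replaced_root_eq (r r' : replaced_root) : reach G (proj1_sig r) (proj1_sig r') -> r = r'.
Proof.
  destruct r as [r [Pr Hr]], r' as [r' [Pr' Hr']]; simpl. intro H.
  apply sig_eq; simpl. rewrite <- Hr, <- Hr'. apply root_eq, H.
Qed.

Lemma replace_reach_kept (u : kept_vertex) z :
  reach replace (inl u) z -> exists v, z = inl v /\ reach G (proj1_sig u) (proj1_sig v).
Proof.
  intro H. eapply (reach_preserved replace
    (fun z => exists v, z = inl v /\ reach G (proj1_sig u) (proj1_sig v)));
    [| exact H | exists u; split; [reflexivity | apply rt_refl]].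
  intros a b Hab [v [-> Hv]]. destruct b as [v'|]; [| destruct Hab].
  exists v'. split; [reflexivity | eapply rt_trans; [exact Hv | apply rt_step, Hab]].
Qed.

Lemma replace_reach_copy r w z : reach replace (inr (r, w)) z -> exists w', z = inr (r, w').
Proof.
  intro H. eapply (reach_preserved replace (fun z => exists w', z = inr (r, w')));
    [| exact H | exists w; reflexivity].
  intros a b Hab [w' ->]. destruct b as [|[r' w'']]; [destruct Hab|].
  destruct Hab as [<- _]. exists w''. reflexivity.
Qed.

Lemma replace_reach_copy_back r w w' : reach X w w' -> reach replace (inr (r, w)) (inr (r, w')).
Proof.
  apply (reach_map X replace (fun w => inr (r, w))).
  intros a b A. split; [reflexivity | exact A].
Qed.

Hypothesis P_adj : forall u v, adj G u v -> P u -> P v.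

Lemma P_reach u v : reach G u v -> P u -> P v.
Proof. apply reach_preserved, P_adj. Qed.

Lemma replace_reach_kept_back (u : kept_vertex) y (hy : ~ P y) :
  reach G (proj1_sig u) y -> reach replace (inl u) (inl (exist _ y hy)).
Proof.
  intro H. apply clos_rt_rtn1 in H. revert hy. induction H as [|y z A _ IH]; intro hz.
  - replace (exist _ (proj1_sig u) hz) with u by (apply sig_eq; reflexivity). apply rt_refl.
  - assert (hy : ~ P y) by (intro Py; exact (hz (P_adj _ _ A Py))).
    eapply rt_trans; [apply (IH hy) | apply rt_step; exact A].
Qed.

Definition replace_proj (z : vert replace) : vert G :=
  match z with inl v => proj1_sig v | inr (r, _) => proj1_sig r end.

Lemma component_replace_kept (u : kept_vertex) :
  isomorphic (component replace (inl u)) (component G (proj1_sig u)).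
Proof.
  assert (to_G : forall z, reach replace (inl u) z -> reach G (proj1_sig u) (replace_proj z))
    by (intros z Hz; destruct (replace_reach_kept u z Hz) as [v [-> Hv]]; exact Hv).
  assert (kept : forall y, reach G (proj1_sig u) y -> ~ P y)
    by (intros y Hy Py; apply (proj2_sig u), (P_reach _ _ (reach_sym _ _ _ Hy) Py)).
  exists (fun z => exist _ (replace_proj (proj1_sig z)) (to_G _ (proj2_sig z))),
         (fun y => exist _ (inl (exist _ (proj1_sig y) (kept _ (proj2_sig y))))
                     (replace_reach_kept_back u _ _ (proj2_sig y))).
  split; [|split].
  - intros [z hz]. apply sig_eq; simpl.
    destruct (replace_reach_kept u z hz) as [v [-> _]]. f_equal. apply sig_eq. reflexivity.
  - intros [y hy]. apply sig_eq. reflexivity.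
  - intros [a ha] [b hb]; simpl.
    destruct (replace_reach_kept u a ha) as [v [-> _]], (replace_reach_kept u b hb) as [v' [-> _]].
    reflexivity.
Qed.

Lemma component_replace_copy (Xc : connected X) r w :
  isomorphic (component replace (inr (r, w))) X.
Proof.
  pose (coord (z : vert replace) := match z with inr (_, w') => w' | inl _ => w end).
  exists (fun z => coord (proj1_sig z)),
         (fun w' => exist _ (inr (r, w')) (replace_reach_copy_back r w w' (proj2 Xc w w'))).
  split; [|split].
  - intros [z hz]. apply sig_eq; simpl.
    destruct (replace_reach_copy r w z hz) as [w' ->]. reflexivity.
  - reflexivity.
  - intros [a ha] [b hb]; simpl.
    destruct (replace_reach_copy r w a ha) as [w' ->], (replace_reach_copy r w b hb) as [w'' ->].
    simpl. tauto.
Qed.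

Lemma has_component_replace (Xc : connected X) (Y : Graph) :
  has_component replace Y ->
  (exists v, ~ P v /\ isomorphic (component G v) Y) \/ isomorphic X Y.
Proof.
  intros [[u|[r w]] Hz].
  - left. exists (proj1_sig u). split; [exact (proj2_sig u)|].
    eapply isomorphic_trans; [apply isomorphic_sym, component_replace_kept | exact Hz].
  - right. eapply isomorphic_trans; [|exact Hz].
    apply isomorphic_sym, (component_replace_copy Xc r w).
Qed.

Lemma has_component_replace_kept v : ~ P v -> has_component replace (component G v).
Proof. intro hv. exists (inl (exist _ v hv)). apply component_replace_kept. Qed.

Definition replaced_root_of v (Pv : P v) : replaced_root :=
  exist _ (root G v) (conj (P_reach _ _ (reach_root G v) Pv) (root_idem G v)).

Lemma has_component_replace_copy (Xc : connected X) v : P v -> has_component replace X.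
Proof.
  intro Pv. destruct (proj1 Xc) as [w].
  exists (inr (replaced_root_of v Pv, w)). apply component_replace_copy, Xc.
Qed.

Lemma replace_disconnected u v : ~ P u -> P v -> inhabited (vert X) -> ~ connected replace.
Proof.
  intros hu Pv [w] [_ Hc].
  destruct (replace_reach_kept _ _ (Hc (inl (exist _ u hu)) (inr (replaced_root_of v Pv, w))))
    as [? [E _]].
  discriminate E.
Qed.

Lemma replace_embeds :
  (forall v, P v -> embeds X (component G v)) -> embeds replace G.
Proof.
  intro HX.
  destruct (choice _ (fun r : replaced_root =>
    embedding_into_component G X _ (HX _ (proj1 (proj2_sig r))))) as [k Hk].
  assert (kinj : forall r w w', k r w = k r w' -> w = w') by apply Hk.
  assert (kadj : forall r w w', adj X w w' <-> adj G (k r w) (k r w')) by apply Hk.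
  assert (kreach : forall r w, reach G (proj1_sig r) (k r w)) by apply Hk.
  assert (kP : forall r w, P (k r w))
    by (intros r w; apply (P_reach _ _ (kreach r w)), (proj1 (proj2_sig r))).
  assert (same_copy : forall r r' w w', reach G (k r w) (k r' w') -> r = r').
  { intros r r' w w' H. apply replaced_root_eq.
    eapply rt_trans; [apply kreach | eapply rt_trans; [exact H | apply reach_sym, kreach]]. }
  exists (fun z => match z with inl u => proj1_sig u | inr (r, w) => k r w end).
  split.
  - intros [u|[r w]] [u'|[r' w']] E.
    + f_equal. apply sig_eq, E.
    + exfalso. apply (proj2_sig u). rewrite E. apply kP.
    + exfalso. apply (proj2_sig u'). rewrite <- E. apply kP.
    + pose proof (same_copy r r' w w' ltac:(rewrite E; apply rt_refl)) as <-.
      apply kinj in E as <-. reflexivity.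
  - intros [u|[r w]] [u'|[r' w']]; simpl.
    + reflexivity.
    + split; [tauto|]. intro A. apply (proj2_sig u), (P_adj _ _ (adj_sym _ _ _ A)), kP.
    + split; [tauto|]. intro A. apply (proj2_sig u'), (P_adj _ _ A), kP.
    + split.
      * intros [<- A]. apply (kadj r), A.
      * intro A. pose proof (same_copy r r' w w' (rt_step _ _ _ _ A)) as <-.
        split; [reflexivity | apply (kadj r), A].
Qed.

Lemma embeds_replace (x0 : vert X) :
  (forall v, P v -> embeds (component G v) X) -> embeds G replace.
Proof.
  intro HX.
  assert (He : forall r, exists e : vert G -> vert X,
    P r -> forall a b, reach G r a -> reach G r b ->
    (e a = e b -> a = b) /\ (adj G a b <-> adj X (e a) (e b))).
  { intro r. destruct (classic (P r)) as [Pr|nPr]; [|exists (fun _ => x0); contradiction].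
    destruct (embedding_of_component G X r x0 (HX r Pr)) as [e He]. exists e. intros _. exact He. }
  destruct (choice _ He) as [e He']; clear He HX.
  assert (eroot : forall a b, P a -> root G a = root G b ->
    (e (root G a) a = e (root G a) b -> a = b) /\
    (adj G a b <-> adj X (e (root G a) a) (e (root G a) b))).
  { intros a b Pa E. apply He'.
    - apply (P_reach _ _ (reach_root G a) Pa).
    - apply reach_sym, reach_root.
    - rewrite E. apply reach_sym, reach_root. }
  exists (fun v => match excluded_middle_informative (P v) with
                   | left Pv => inr (replaced_root_of v Pv, e (root G v) v)
                   | right hv => inl (exist _ v hv) end).
  split.
  - intros a b.
    destruct (excluded_middle_informative (P a)) as [Pa|ha],
      (excluded_middle_informative (P b)) as [Pb|hb];
      intro E; try discriminate E.
    + injection E as Er Ee. apply (eroot a b Pa Er). rewrite Ee, Er. reflexivity.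
    + injection E as E. exact E.
  - intros a b.
    destruct (excluded_middle_informative (P a)) as [Pa|ha],
      (excluded_middle_informative (P b)) as [Pb|hb];
      simpl.
    + split.
      * intro A. assert (Er : root G a = root G b) by apply root_eq, rt_step, A.
        split; [apply sig_eq, Er | rewrite <- Er; apply (eroot a b Pa Er), A].
      * intros [Er A]. apply (f_equal (@proj1_sig _ _)) in Er; simpl in Er.
        apply (eroot a b Pa Er). rewrite Er at 2. exact A.
    + split; [|tauto]. intro A. exact (hb (P_adj _ _ A Pa)).
    + split; [|tauto]. intro A. exact (ha (P_adj _ _ (adj_sym _ _ _ A) Pb)).
    + reflexivity.
Qed.

Lemma replace_equimorphic (x0 : vert X) :
  (forall v, P v -> equimorphic (component G v) X) -> equimorphic replace G.
Proof.
  intro HX. split.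
  - apply replace_embeds. intros v Pv. apply (HX v Pv).
  - apply (embeds_replace x0). intros v Pv. apply (HX v Pv).
Qed.

End Replacement.

Lemma infinitely_often_subsequence (Q : nat -> Prop) :
  (forall N, exists n, N <= n /\ Q n) ->
  exists s : nat -> nat, (forall m n, s m = s n -> m = n) /\ forall k, Q (s k).
Proof.
  intro HQ. destruct (choice _ HQ) as [c Hc].
  pose (s := fix s k := match k with 0 => c 0 | S k => c (S (s k)) end).
  assert (s_step : forall k, s k < s (S k))
    by (intro k; simpl; pose proof (proj1 (Hc (S (s k)))); lia).
  assert (s_mono : forall m n, m < n -> s m < s n).
  { intros m n H. induction H as [|n _ IH]; [apply s_step | pose proof (s_step n); lia]. }
  exists s. split.
  - intros m n E.
    destruct (Nat.lt_total m n) as [H|[H|H]]; [|exact H|]; apply s_mono in H; lia.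
  - intros [|k]; apply Hc.
Qed.

Lemma subsequence_dichotomy (Q : nat -> Prop) :
  exists s : nat -> nat, (forall m n, s m = s n -> m = n) /\
    ((forall k, Q (s k)) \/ (forall k, ~ Q (s k))).
Proof.
  destruct (classic (forall N, exists n, N <= n /\ Q n)) as [HQ|HQ].
  - destruct (infinitely_often_subsequence Q HQ) as [s [Hs HsQ]].
    exists s. split; [exact Hs | left; exact HsQ].
  - apply not_all_ex_not in HQ as [N HN]. exists (fun k => N + k). split; [intros m n E; lia|].
    right. intros k Qk. apply HN. exists (N + k). split; [lia | exact Qk].
Qed.

Definition pairwise_nonisomorphic (F : nat -> Graph) : Prop :=
  forall m n, m <> n -> ~ isomorphic (F m) (F n).

Definition disconnected_siblings (G : Graph) (F : nat -> Graph) : Prop :=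
  (forall n, sibling (F n) G /\ ~ connected (F n)) /\ pairwise_nonisomorphic F.

Section Siblings.

Variables (G : Graph) (x : vert G) (F : nat -> Graph).
Hypothesis F_connected : forall n, connected (F n).
Hypothesis F_equimorphic : forall n, equimorphic (F n) (component G x).
Hypothesis F_nonisomorphic : pairwise_nonisomorphic F.

Lemma replace_sibling (P : vert G -> Prop) (P_adj : forall u v, adj G u v -> P u -> P v) n :
  (forall v, P v -> equimorphic (component G v) (component G x)) ->
  sibling (replace G P (F n)) G.
Proof.
  intro HP. destruct (proj1 (F_connected n)) as [w].
  apply (replace_equimorphic G P (F n) P_adj w). intros v Pv.
  eapply equimorphic_trans; [apply HP, Pv | apply equimorphic_sym, F_equimorphic].
Qed.

Lemma disconnected_siblings_absent :
  at_least_two_components G -> (forall n, ~ has_component G (F n)) ->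
  exists F', disconnected_siblings G F'.
Proof.
  intros [a [b Hab]] Habsent.
  assert (x_adj : forall u v, adj G u v -> reach G x u -> reach G x v)
    by (intros u v A H; eapply rt_trans; [exact H | apply rt_step, A]).
  assert (Hout : exists v, ~ reach G x v).
  { destruct (classic (reach G x a)) as [Ha|Ha]; [|exists a; exact Ha].
    exists b. intro Hb. apply Hab. eapply rt_trans; [apply reach_sym, Ha | exact Hb]. }
  destruct Hout as [v Hv].
  exists (fun n => replace G (reach G x) (F n)). split.
  - intro n. split.
    + apply replace_sibling; [exact x_adj|]. intros u Hu.
      apply isomorphic_equimorphic, component_reach, reach_sym, Hu.
    + apply (replace_disconnected G _ _ x_adj v x Hv (rt_refl _ _ _) (proj1 (F_connected n))).
  - intros m n Hmn I.
    pose proof (has_component_replace_copy G _ (F m) x_adj (F_connected m) x (rt_refl _ _ _)) as Hm.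
    destruct (has_component_replace G _ (F n) x_adj (F_connected n) _
                (has_component_isomorphic _ _ _ I Hm)) as [[u [_ Hu]]|Hnm].
    + exact (Habsent m (ex_intro _ u Hu)).
    + exact (F_nonisomorphic n m (not_eq_sym Hmn) Hnm).
Qed.

Lemma disconnected_siblings_present :
  (forall n, has_component G (F n)) -> exists F', disconnected_siblings G F'.
Proof.
  intro Hpresent.
  pose (P n v := isomorphic (component G v) (F n)).
  assert (P_adj : forall n u v, adj G u v -> P n u -> P n v)
    by (intros n u v A H; eapply isomorphic_trans;
        [apply isomorphic_sym, component_reach, rt_step, A | exact H]).
  assert (not_P : forall m n v, m <> n -> P n v -> ~ P m v)
    by (intros m n v Hmn Hn Hm; apply (F_nonisomorphic m n Hmn);
        eapply isomorphic_trans; [apply isomorphic_sym, Hm | exact Hn]).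
  exists (fun n => replace G (P n) (F (S n))). split.
  - intro n. split.
    + apply replace_sibling; [apply P_adj|]. intros v Hv.
      eapply equimorphic_trans; [apply isomorphic_equimorphic, Hv | apply F_equimorphic].
    + destruct (Hpresent n) as [v Hv], (Hpresent (S n)) as [u Hu].
      apply (replace_disconnected G (P n) _ (P_adj n) u v (not_P n (S n) u (n_Sn n) Hu) Hv),
        F_connected.
  - intros m n Hmn I. destruct (Hpresent n) as [v Hv].
    pose proof (has_component_replace_kept G (P m) (F (S m)) (P_adj m) v (not_P m n v Hmn Hv))
      as Hm.
    destruct (has_component_replace G _ (F (S n)) (P_adj n) (F_connected (S n)) _
                (has_component_isomorphic _ _ _ I Hm)) as [[u [hu Hu]]|Hnn].
    + apply hu. eapply isomorphic_trans; [exact Hu | exact Hv].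
    + apply (F_nonisomorphic (S n) n (not_eq_sym (n_Sn n))).
      eapply isomorphic_trans; [exact Hnn | exact Hv].
Qed.

End Siblings.

Lemma disconnected_siblings_exist (G : Graph) (x : vert G) (F : nat -> Graph) :
  (forall n, connected (F n)) -> (forall n, equimorphic (F n) (component G x)) ->
  pairwise_nonisomorphic F ->
  at_least_two_components G -> exists F', disconnected_siblings G F'.
Proof.
  intros F_connected F_equimorphic F_nonisomorphic Htwo.
  destruct (subsequence_dichotomy (fun n => has_component G (F n))) as [s [Hs [Hpresent|Habsent]]];
    [ apply (disconnected_siblings_present G x (fun k => F (s k)))
    | apply (disconnected_siblings_absent G x (fun k => F (s k))) ]; auto;
    intros m n Hmn; apply F_nonisomorphic; intro E; apply Hmn, Hs, E.
Qed.

Lemma component_isomorphic_connected (G : Graph) (x : vert G) :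
  ~ at_least_two_components G -> isomorphic (component G x) G.
Proof.
  intro H. apply component_whole. intros a b.
  apply NNPP. intro Hab. apply H. exists a, b. exact Hab.
Qed.

Theorem lemma2p2 (G : Graph) (hG : countable_graph G) :
  (exists x : vert G,
     exists F : nat -> Graph,
       (forall n, connected (F n) /\ equimorphic (F n) (component G x)) /\
       (forall m n, m <> n -> ~ isomorphic (F m) (F n))) ->
  (exists F : nat -> Graph,
     (forall n, sibling (F n) G) /\
     (forall m n, m <> n -> ~ isomorphic (F m) (F n))) /\
  (at_least_two_components G ->
   exists F : nat -> Graph,
     (forall n, sibling (F n) G /\ ~ connected (F n)) /\
     (forall m n, m <> n -> ~ isomorphic (F m) (F n))).
Proof.
  intros [x [F [HF Hnon]]].
  assert (Hdis : at_least_two_components G -> exists F', disconnected_siblings G F')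
    by (apply (disconnected_siblings_exist G x F); [intro n; apply HF.. | exact Hnon]).
  split; [|exact Hdis].
  destruct (classic (at_least_two_components G)) as [Htwo|Hone].
  - destruct (Hdis Htwo) as [F' [HF' Hnon']]. exists F'. split; [intro n; apply HF' | exact Hnon'].
  - exists F. split; [|exact Hnon]. intro n.
    eapply equimorphic_trans; [apply HF|].
    apply isomorphic_equimorphic, component_isomorphic_connected, Hone.
Qed.
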